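(* For every environment $\omega$, $n=l+m$, $x=-l+m$ with $l,m\ge 0$, $$P^{\omega}_n(X_n=x)=P^{\mathbf 0}_n(X_n=x)+\tfrac12\{p^{(H)}_n(l,m)^2-q^{(H)}_n(l,m)^2\}\sin(\omega_0)$$ $$\quad-\frac{r^{(H)}_n(l,m)}{2}\Big[p^{(H)}_n(l,m)\,\Im\big((1+e^{2i\omega_0})\Theta^{(p)}_n(l,m)\overline{\Theta^{(r)}_n(l,m)}\big)+q^{(H)}_n(l,m)\,\Im\big((1+e^{2i\omega_0})\Theta^{(s)}_n(l,m)\overline{\Theta^{(q)}_n(l,m)}\big)\Big],$$ where $P^{\mathbf 0}_n$ is the quenched law for the environment $\omega\equiv 0$ and $\Im$ denotes imaginary part.
   Context: $U_x=\frac{1}{\sqrt2}\begin{pmatrix} e^{i\omega_x} & 1\\ 1 & -e^{-i\omega_x}\end{pmatrix}=\begin{pmatrix} a_x & b_x\\ c_x & d_x\end{pmatrix}$, $P_x=\begin{pmatrix} a_x & b_x\\ 0&0\end{pmatrix}$, $Q_x=\begin{pmatrix} 0&0\\ c_x & d_x\end{pmatrix}$, $R_0=\begin{pmatrix} c_0 & d_0\\ 0&0\end{pmatrix}$, $S_0=\begin{pmatrix} 0&0\\ a_0 & b_0\end{pmatrix}$. $\Xi_0(0,0)=I$, $\Xi_n(l,m)=0$ if $l<0$ or $m<0$, and $\Xi_{n+1}(l,m)=P_{x+1}\Xi_n(l-1,m)+Q_{x-1}\Xi_n(l,m-1)$ for $l,m\ge0$, $l+m=n+1$, $x=-l+m$.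 With $\varphi_*={}^T[1/\sqrt2,i/\sqrt2]$, $P^{\omega}_n(X_n=x)=\|\Xi_n(l,m)\varphi_*\|^2$. The quantities $\Theta^{(a)}_n(l,m)$ and $a^{(H)}_n(l,m)$ ($a\in\{p,q,r,s\}$) are defined by: for $\min\{l,m\}\ge1$, $\Theta^{(p)}_n=e^{i(\omega_{-1}+\cdots+\omega_{-(l-m-1)})}$ if $l-1>m$, $1$ if $l-1=m$, $e^{-i(\omega_0+\cdots+\omega_{m-l})}$ if $l-1<m$; $\Theta^{(q)}_n=e^{i(\omega_0+\cdots+\omega_{-(l-m)})}$ if $l>m-1$, $1$ if $l=m-1$, $e^{-i(\omega_1+\cdots+\omega_{m-l-1})}$ if $l<m-1$; $\Theta^{(r)}_n=e^{i(\omega_0+\cdots+\omega_{-(l-m-1)})}$ if $l>m$, $1$ if $l=m$, $e^{-i(\omega_1+\cdots+\omega_{m-l})}$ if $l<m$; $\Theta^{(s)}_n=e^{i(\omega_{-1}+\cdots+\omega_{-(l-m)})}$ if $l>m$, $1$ if $l=m$, $e^{-i(\omega_0+\cdots+\omega_{m-l-1})}$ if $l<m$; $p^{(H)}_n(l,m)=(1/\sqrt2)^{n-1}\sum_{\gamma=1}^{(l-1)\wedge m}(-1)^{m-\gamma}\binom{l-1}{\gamma}\binom{m-1}{\gamma-1}$, $q^{(H)}_n(l,m)=(1/\sqrt2)^{n-1}\sum_{\gamma=1}^{l\wedge(m-1)}(-1)^{m-\gamma-1}\binom{l-1}{\gamma-1}\binom{m-1}{\gamma}$, $r^{(H)}_n=s^{(H)}_n=(1/\sqrt2)^{n-1}\sum_{\gamma=1}^{l\wedge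 m}(-1)^{m-\gamma}\binom{l-1}{\gamma-1}\binom{m-1}{\gamma-1}$. For $\min\{l,m\}=0$: $q^{(H)}_n(0,n)=(-1/\sqrt2)^{n-1}$, $\Theta^{(q)}_n(0,n)=e^{-i(\omega_1+\cdots+\omega_{n-1})}$, $p^{(H)}_n(n,0)=(1/\sqrt2)^{n-1}$, $\Theta^{(p)}_n(n,0)=e^{i(\omega_{-1}+\cdots+\omega_{-(n-1)})}$, all other $a^{(H)}$ equal $0$ and all other $\Theta$ equal $1$. These satisfy $\Xi_n(l,m)=\sum_{a}\Theta^{(a)}_n a^{(H)}_n A_0$ with $A_0\in\{P_0,Q_0,R_0,S_0\}$ respectively. *)

From Stdlib Require Import Reals ZArith Arith Bool.
Open Scope R_scope.

Definition Cx : Type := (R * R)%type.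
Definition Cre (z : Cx) : R := fst z.
Definition Cim (z : Cx) : R := snd z.
Definition CR (a : R) : Cx := (a, 0).
Definition Czero : Cx := (0, 0).
Definition Cone : Cx := (1, 0).
Definition Ci : Cx := (0, 1).
Definition Cadd (z w : Cx) : Cx := (fst z + fst w, snd z + snd w).
Definition Copp (z : Cx) : Cx := (- fst z, - snd z).
Definition Cmul (z w : Cx) : Cx :=
  (fst z * fst w - snd z * snd w, fst z * snd w + snd z * fst w).
Definition Cconj (z : Cx) : Cx := (fst z, - snd z).
Definition Cnorm2 (z : Cx) : R := fst z * fst z + snd z * snd z.
Definition Cexpi (t : R) : Cx := (cos t, sin t).

Record M2 := mkM2 { m11 : Cx; m12 : Cx; m21 : Cx; m22 : Cx }.
Definition Mzero : M2 := mkM2 Czero Czero Czero Czero.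
Definition Mid : M2 := mkM2 Cone Czero Czero Cone.
Definition Madd (A B : M2) : M2 :=
  mkM2 (Cadd (m11 A) (m11 B)) (Cadd (m12 A) (m12 B))
       (Cadd (m21 A) (m21 B)) (Cadd (m22 A) (m22 B)).
Definition Mmul (A B : M2) : M2 :=
  mkM2 (Cadd (Cmul (m11 A) (m11 B)) (Cmul (m12 A) (m21 B)))
       (Cadd (Cmul (m11 A) (m12 B)) (Cmul (m12 A) (m22 B)))
       (Cadd (Cmul (m21 A) (m11 B)) (Cmul (m22 A) (m21 B)))
       (Cadd (Cmul (m21 A) (m12 B)) (Cmul (m22 A) (m22 B))).
Definition Mapply (A : M2) (v : Cx * Cx) : Cx * Cx :=
  (Cadd (Cmul (m11 A) (fst v)) (Cmul (m12 A) (snd v)),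
   Cadd (Cmul (m21 A) (fst v)) (Cmul (m22 A) (snd v))).
Definition Vnorm2 (v : Cx * Cx) : R := Cnorm2 (fst v) + Cnorm2 (snd v).

Definition env := Z -> R.

(* U_x = 1/sqrt2 [[e^{i w_x}, 1], [1, - e^{- i w_x}]] = [[a_x, b_x], [c_x, d_x]] *)
Definition a_ (om : env) (x : Z) : Cx := Cmul (CR (/ sqrt 2)) (Cexpi (om x)).
Definition b_ (om : env) (x : Z) : Cx := CR (/ sqrt 2).
Definition c_ (om : env) (x : Z) : Cx := CR (/ sqrt 2).
Definition d_ (om : env) (x : Z) : Cx :=
  Copp (Cmul (CR (/ sqrt 2)) (Cexpi (- om x))).

Definition Pm (om : env) (x : Z) : M2 := mkM2 (a_ om x) (b_ om x) Czero Czero.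
Definition Qm (om : env) (x : Z) : M2 := mkM2 Czero Czero (c_ om x) (d_ om x).

Definition pos (l m : nat) : Z := (- Z.of_nat l + Z.of_nat m)%Z.

(* Xi_n(l,m); it is zero unless l + m = n (in particular Xi_n(l,m) = 0 for
   the "negative" indices, which cannot occur for nat l m). *)
Fixpoint Xi (om : env) (n : nat) (l m : nat) : M2 :=
  match n with
  | O => match l, m with O, O => Mid | _, _ => Mzero end
  | S n' =>
      Madd
        (match l with
         | O => Mzero
         | S l' => Mmul (Pm om (pos l m + 1)%Z) (Xi om n' l' m)
         end)
        (match m with
         | O => Mzero
         | S m' => Mmul (Qm om (pos l m - 1)%Z) (Xi om n' l m')
         end)
  end.

Definition phi_star : Cx * Cx := (CR (/ sqrt 2), (0, / sqrt 2)).

(* quenched probability P^omega_n(X_n = -l+m), for l + m = n *)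
Definition prob (om : env) (n l m : nat) : R :=
  Vnorm2 (Mapply (Xi om n l m) phi_star).

Definition env0 : env := fun _ => 0.

Fixpoint binom (n k : nat) : nat :=
  match n, k with
  | _, O => 1
  | O, S _ => 0
  | S n', S k' => (binom n' k' + binom n' k)%nat
  end.

Fixpoint sum1 (N : nat) (f : nat -> R) : R :=
  match N with
  | O => 0
  | S N' => sum1 N' f + f N
  end.

Definition sgn (k : nat) : R := (-1) ^ k.

Definition pH (n l m : nat) : R :=
  if andb (1 <=? l)%nat (1 <=? m)%nat then
    (/ sqrt 2) ^ (n - 1) *
    sum1 (Nat.min (l - 1) m)
      (fun g => sgn (m - g) * INR (binom (l - 1) g) * INR (binom (m - 1) (g - 1)))
  else if (m =? 0)%nat then (/ sqrt 2) ^ (n - 1)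
  else 0.

Definition qH (n l m : nat) : R :=
  if andb (1 <=? l)%nat (1 <=? m)%nat then
    (/ sqrt 2) ^ (n - 1) *
    sum1 (Nat.min l (m - 1))
      (fun g => sgn (m - g - 1) * INR (binom (l - 1) (g - 1)) * INR (binom (m - 1) g))
  else if (l =? 0)%nat then (- / sqrt 2) ^ (n - 1)
  else 0.

Definition rH (n l m : nat) : R :=
  if andb (1 <=? l)%nat (1 <=? m)%nat then
    (/ sqrt 2) ^ (n - 1) *
    sum1 (Nat.min l m)
      (fun g => sgn (m - g) * INR (binom (l - 1) (g - 1)) * INR (binom (m - 1) (g - 1)))
  else 0.

Definition sH (n l m : nat) : R := rH n l m.

(* wsum om a b = omega_a + omega_{a+1} + ... + omega_b  (0 if b < a) *)
Definition wsum (om : env) (a b : Z) : R :=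
  let fix go (k : nat) : R :=
    match k with
    | O => 0
    | S k' => go k' + om (a + Z.of_nat k')%Z
    end in
  go (Z.to_nat (b - a + 1)).

Definition dd (l m : nat) : Z := (Z.of_nat m - Z.of_nat l)%Z.

Definition ThetaP (om : env) (n l m : nat) : Cx :=
  if andb (1 <=? l)%nat (1 <=? m)%nat then
    let d := dd l m in
    if (d + 1 <? 0)%Z then Cexpi (wsum om (d + 1) (-1))
    else if (d + 1 =? 0)%Z then Cone
    else Cexpi (- wsum om 0 d)
  else if (m =? 0)%nat then Cexpi (wsum om (- (Z.of_nat n - 1)) (-1))
  else Cone.

Definition ThetaQ (om : env) (n l m : nat) : Cx :=
  if andb (1 <=? l)%nat (1 <=? m)%nat then
    let d := dd l m in
    if (d <=? 0)%Z then Cexpi (wsum om d 0)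
    else if (d =? 1)%Z then Cone
    else Cexpi (- wsum om 1 (d - 1))
  else if (l =? 0)%nat then Cexpi (- wsum om 1 (Z.of_nat n - 1))
  else Cone.

Definition ThetaR (om : env) (n l m : nat) : Cx :=
  if andb (1 <=? l)%nat (1 <=? m)%nat then
    let d := dd l m in
    if (d <? 0)%Z then Cexpi (wsum om (d + 1) 0)
    else if (d =? 0)%Z then Cone
    else Cexpi (- wsum om 1 d)
  else Cone.

Definition ThetaS (om : env) (n l m : nat) : Cx :=
  if andb (1 <=? l)%nat (1 <=? m)%nat then
    let d := dd l m in
    if (d <? 0)%Z then Cexpi (wsum om d (-1))
    else if (d =? 0)%Z then Cone
    else Cexpi (- wsum om 0 (d - 1))
  else Cone.

From Pilot Require Import Defs.
From Stdlib Require Import Reals ZArith Arith Lia Lra Ring Psatz.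
(* [Reals] exports an unrelated constant [pos]; we mean the lattice position. *)
Notation pos := Defs.pos.
Open Scope R_scope.

(* Every transfer matrix Xi_n(l,m) with n >= 1
   lies in the span of the four matrices P_0, Q_0, R_0, S_0 built from the
   coin at the origin, with coordinates
       Theta^(p) p^(H),  Theta^(q) q^(H),  Theta^(r) r^(H),  Theta^(s) r^(H):
   a real amplitude of the homogeneous (Hadamard) walk times a unit phase.

   1. Combinatorics: the signed binomial sums defining p^(H), q^(H), r^(H)
      satisfy the four two-term recursions of the Hadamard walk (Pascal).
   2. Phases: writing omega_a + ... + omega_b = F(b+1) - F(a) for a discrete
      primitive F of omega, each Theta is e^{i phi(x)} for a phase phi of the
      position x = -l+m alone, and one step of the walk shifts phi by omega_y.
   3. Algebra: left multiplication by P_y or Q_y acts linearly on the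
      coordinates in the basis (P_0, Q_0, R_0, S_0); with 1 and 2 this gives
      the decomposition of Xi_n(l,m) by induction on n.
   4. Evaluating ||Xi_n(l,m) phi_*||^2 on the decomposition gives a closed
      form of P^omega_n(X_n = x); for omega = 0 every phase vanishes, and the
      theorem is the difference of the two closed forms (n = 0 is trivial). *)

Lemma sum1_ext K f h :
  (forall g, (1 <= g <= K)%nat -> f g = h g) -> sum1 K f = sum1 K h.
Proof.
  induction K as [|K IH]; intros H; simpl; [reflexivity|].
  rewrite IH by (intros; apply H; lia). rewrite H by lia. reflexivity.
Qed.

Lemma sum1_add K f h : sum1 K (fun g => f g + h g) = sum1 K f + sum1 K h.
Proof. induction K as [|K IH]; simpl; [ring|]. rewrite IH; ring. Qed.

Lemma sum1_sub K f h : sum1 K (fun g => f g - h g) = sum1 K f - sum1 K h.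
Proof. induction K as [|K IH]; simpl; [ring|]. rewrite IH; ring. Qed.

Lemma sum1_scal K c f : sum1 K (fun g => c * f g) = c * sum1 K f.
Proof. induction K as [|K IH]; simpl; [ring|]. rewrite IH; ring. Qed.

Lemma sum1_zero K f : (forall g, (1 <= g <= K)%nat -> f g = 0) -> sum1 K f = 0.
Proof.
  induction K as [|K IH]; intros H; simpl; [reflexivity|].
  rewrite IH by (intros; apply H; lia). rewrite H by lia. ring.
Qed.

(* Terms beyond the support of [f] do not contribute: this lets all three
   coefficient sums be taken over one common range. *)
Lemma sum1_extend K K' f :
  (K <= K')%nat -> (forall g, (K < g)%nat -> f g = 0) -> sum1 K' f = sum1 K f.
Proof.
  intros HK H. induction K' as [|K' IH].
  - replace K with 0%nat by lia. reflexivity.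
  - destruct (Nat.eq_dec K (S K')) as [->|]; [reflexivity|].
    simpl. rewrite IH by lia. rewrite H by lia. ring.
Qed.

Lemma sum1_shift B f : sum1 (S B) f = f 1%nat + sum1 B (fun g => f (S g)).
Proof. induction B as [|B IH]; simpl; [ring|]. simpl in IH. rewrite IH. ring. Qed.

Lemma binom_small n k : (n < k)%nat -> binom n k = 0%nat.
Proof.
  revert k; induction n as [|n IH]; intros k H; destruct k; try lia; simpl; auto.
  rewrite !IH by lia. reflexivity.
Qed.

Lemma binom_0r n : binom n 0 = 1%nat.
Proof. destruct n; reflexivity. Qed.

Lemma binom_pascal n g :
  (1 <= g)%nat -> binom (S n) g = (binom n (g - 1) + binom n g)%nat.
Proof. intros H. destruct g; [lia|]. replace (S g - 1)%nat with g by lia. reflexivity. Qed.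

Lemma sgn_sub m g : (g <= m)%nat -> sgn (m - g) = (-1) ^ m * (-1) ^ g.
Proof.
  intros H. unfold sgn.
  replace ((-1) ^ m) with ((-1) ^ (m - g) * (-1) ^ g) by (rewrite <- pow_add; f_equal; lia).
  rewrite Rmult_assoc, <- Rpow_mult_distr.
  replace (-1 * -1) with 1 by ring. rewrite pow1. ring.
Qed.

(* The three alternating binomial convolutions behind p^(H), q^(H), r^(H)
   (with L = l-1, M = m-1 and the sign (-1)^m factored out). *)
Definition altP (L M B : nat) : R :=
  sum1 B (fun g => (-1) ^ g * INR (binom L g) * INR (binom M (g - 1))).
Definition altQ (L M B : nat) : R :=
  sum1 B (fun g => (-1) ^ g * INR (binom L (g - 1)) * INR (binom M g)).
Definition altR (L M B : nat) : R :=
  sum1 B (fun g => (-1) ^ g * INR (binom L (g - 1)) * INR (binom M (g - 1))).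

(* Pascal's rule in each variable gives the recursions among them. *)
Lemma altP_succL L M B : altP (S L) M B = altP L M B + altR L M B.
Proof.
  unfold altP, altR. rewrite <- sum1_add. apply sum1_ext; intros g Hg.
  rewrite binom_pascal by lia. rewrite plus_INR. ring.
Qed.

Lemma altQ_succM L M B : altQ L (S M) B = altR L M B + altQ L M B.
Proof.
  unfold altQ, altR. rewrite <- sum1_add. apply sum1_ext; intros g Hg.
  rewrite (binom_pascal M) by lia. rewrite plus_INR. ring.
Qed.

Lemma altR_succL L M B : altR (S L) M (S B) = altR L M (S B) - altQ L M B.
Proof.
  unfold altR, altQ. rewrite !sum1_shift, Nat.sub_diag, !binom_0r.
  match goal with |- _ + ?X = _ + ?Y - ?Z => replace X with (Y - Z); [ring|] end.
  rewrite <- sum1_sub. apply sum1_ext; intros g Hg.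
  replace (S g - 1)%nat with g by lia. rewrite binom_pascal by lia.
  rewrite plus_INR. simpl pow. ring.
Qed.

Lemma altR_succM L M B : altR L (S M) (S B) = altR L M (S B) - altP L M B.
Proof.
  unfold altR, altP. rewrite !sum1_shift, Nat.sub_diag, !binom_0r.
  match goal with |- _ + ?X = _ + ?Y - ?Z => replace X with (Y - Z); [ring|] end.
  rewrite <- sum1_sub. apply sum1_ext; intros g Hg.
  replace (S g - 1)%nat with g by lia. rewrite (binom_pascal M) by lia.
  rewrite plus_INR. simpl pow. ring.
Qed.

(* Boundary values: with an empty side only the term g = 1 survives. *)
Lemma altR_edge L M B : (L = 0 \/ M = 0)%nat -> altR L M (S B) = -1.
Proof.
  intros HLM. unfold altR. rewrite sum1_shift, sum1_zero.
  - rewrite Nat.sub_diag, !binom_0r. simpl. ring.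
  - intros g Hg. replace (S g - 1)%nat with g by lia.
    destruct HLM as [-> | ->]; rewrite (binom_small 0 g) by lia; simpl; ring.
Qed.

Lemma altP_0M M B : altP 0 M B = 0.
Proof. apply sum1_zero. intros g Hg. rewrite (binom_small 0 g) by lia. simpl. ring. Qed.

Lemma altQ_L0 L B : altQ L 0 B = 0.
Proof. apply sum1_zero. intros g Hg. rewrite (binom_small 0 g) by lia. simpl. ring. Qed.

Notation s2 := (/ sqrt 2).

Lemma pH_interior n L M B : (L + M + 1 <= B)%nat ->
  pH n (S L) (S M) = s2 ^ (n - 1) * ((-1) ^ S M * altP L M B).
Proof.
  intros HB. unfold pH. cbn [andb Nat.leb].
  replace (S L - 1)%nat with L by lia. replace (S M - 1)%nat with M by lia. f_equal.
  transitivity (sum1 (Nat.min L (S M))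
    (fun g => (-1) ^ S M * ((-1) ^ g * INR (binom L g) * INR (binom M (g - 1))))).
  - apply sum1_ext; intros g Hg. rewrite sgn_sub by lia. ring.
  - rewrite sum1_scal. f_equal. symmetry. apply sum1_extend; [lia|].
    intros g Hg. destruct (Nat.lt_ge_cases L g).
    + rewrite binom_small by lia. simpl; ring.
    + rewrite (binom_small M) by lia. simpl; ring.
Qed.

Lemma qH_interior n L M B : (L + M + 1 <= B)%nat ->
  qH n (S L) (S M) = s2 ^ (n - 1) * ((-1) ^ M * altQ L M B).
Proof.
  intros HB. unfold qH. cbn [andb Nat.leb].
  replace (S L - 1)%nat with L by lia. replace (S M - 1)%nat with M by lia. f_equal.
  transitivity (sum1 (Nat.min (S L) M)
    (fun g => (-1) ^ M * ((-1) ^ g * INR (binom L (g - 1)) * INR (binom M g)))).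
  - apply sum1_ext; intros g Hg. replace (S M - g - 1)%nat with (M - g)%nat by lia.
    rewrite sgn_sub by lia. ring.
  - rewrite sum1_scal. f_equal. symmetry. apply sum1_extend; [lia|].
    intros g Hg. destruct (Nat.lt_ge_cases (S L) g).
    + rewrite (binom_small L) by lia. simpl; ring.
    + rewrite (binom_small M) by lia. simpl; ring.
Qed.

Lemma rH_interior n L M B : (L + M + 1 <= B)%nat ->
  rH n (S L) (S M) = s2 ^ (n - 1) * ((-1) ^ S M * altR L M B).
Proof.
  intros HB. unfold rH. cbn [andb Nat.leb].
  replace (S L - 1)%nat with L by lia. replace (S M - 1)%nat with M by lia. f_equal.
  transitivity (sum1 (Nat.min (S L) (S M))
    (fun g => (-1) ^ S M * ((-1) ^ g * INR (binom L (g - 1)) * INR (binom M (g - 1))))).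
  - apply sum1_ext; intros g Hg. rewrite sgn_sub by lia. ring.
  - rewrite sum1_scal. f_equal. symmetry. apply sum1_extend; [lia|].
    intros g Hg. destruct (Nat.lt_ge_cases (S L) g).
    + rewrite (binom_small L) by lia. simpl; ring.
    + rewrite (binom_small M) by lia. simpl; ring.
Qed.

Lemma pH_l0 n L : pH n (S L) 0 = s2 ^ (n - 1). Proof. reflexivity. Qed.
Lemma pH_0m n M : pH n 0 (S M) = 0. Proof. reflexivity. Qed.
Lemma qH_0m n M : qH n 0 (S M) = (- s2) ^ (n - 1). Proof. reflexivity. Qed.
Lemma qH_l0 n L : qH n (S L) 0 = 0. Proof. reflexivity. Qed.
Lemma rH_0m n m : rH n 0 m = 0. Proof. reflexivity. Qed.
Lemma rH_l0 n l : rH n l 0 = 0. Proof. unfold rH. destruct l; reflexivity. Qed.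

Lemma pow_pred x n : (1 <= n)%nat -> x ^ n = x * x ^ (n - 1).
Proof. intros H. destruct n; [lia|]. simpl. rewrite Nat.sub_0_r. reflexivity. Qed.

Lemma succ_sub1 n : (S n - 1)%nat = n. Proof. lia. Qed.

(* The homogeneous amplitudes obey the recursion of the Hadamard walk:
   a step to the left (l+1) feeds P and R, a step to the right (m+1) feeds
   Q and S (recall s^(H) = r^(H)). *)
Lemma pH_step n l m : (1 <= n)%nat -> (l + m = n)%nat ->
  pH (S n) (S l) m = s2 * (pH n l m + rH n l m).
Proof.
  intros Hn Hlm. destruct m as [|M].
  - destruct l as [|L]; [lia|]. rewrite !pH_l0, rH_l0, succ_sub1, (pow_pred _ n) by lia. ring.
  - destruct l as [|L].
    + rewrite (pH_interior _ 0 M (S n)) by lia. rewrite altP_0M, pH_0m, rH_0m. ring.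
    + rewrite (pH_interior _ (S L) M n), (pH_interior _ L M n), (rH_interior _ L M n),
        altP_succL by lia.
      rewrite succ_sub1, (pow_pred _ n) by lia. ring.
Qed.

Lemma rH_step_l n l m : (1 <= n)%nat -> (l + m = n)%nat ->
  rH (S n) (S l) m = s2 * (qH n l m + rH n l m).
Proof.
  intros Hn Hlm. destruct m as [|M].
  - destruct l as [|L]; [lia|]. rewrite !rH_l0, qH_l0. ring.
  - destruct l as [|L].
    + rewrite (rH_interior _ 0 M (S n)) by lia.
      rewrite altR_edge, qH_0m, rH_0m, succ_sub1 by lia.
      replace n with (S M) by lia. rewrite succ_sub1.
      replace (- s2) with (-1 * s2) by ring. rewrite Rpow_mult_distr. simpl pow. ring.
    + rewrite (rH_interior (S n) (S L) M (S n)), (qH_interior n L M n),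
        (rH_interior n L M (S n)), altR_succL by lia.
      rewrite succ_sub1, (pow_pred _ n) by lia. simpl pow. ring.
Qed.

Lemma qH_step n l m : (1 <= n)%nat -> (l + m = n)%nat ->
  qH (S n) l (S m) = s2 * (rH n l m - qH n l m).
Proof.
  intros Hn Hlm. destruct l as [|L].
  - destruct m as [|M]; [lia|]. rewrite !qH_0m, rH_0m, succ_sub1, (pow_pred _ n) by lia. ring.
  - destruct m as [|M].
    + rewrite (qH_interior _ L 0 (S n)) by lia. rewrite altQ_L0, qH_l0, rH_l0. ring.
    + rewrite (qH_interior _ L (S M) n), (qH_interior _ L M n), (rH_interior _ L M n),
        altQ_succM by lia.
      rewrite succ_sub1, (pow_pred _ n) by lia. simpl pow. ring.
Qed.

Lemma rH_step_m n l m : (1 <= n)%nat -> (l + m = n)%nat ->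
  rH (S n) l (S m) = s2 * (pH n l m - rH n l m).
Proof.
  intros Hn Hlm. destruct l as [|L].
  - destruct m as [|M]; [lia|]. rewrite !rH_0m, pH_0m. ring.
  - destruct m as [|M].
    + rewrite (rH_interior _ L 0 (S n)) by lia.
      rewrite altR_edge, pH_l0, rH_l0, succ_sub1, (pow_pred _ n) by lia. simpl pow. ring.
    + rewrite (rH_interior _ L (S M) (S n)), (pH_interior _ L M n),
        (rH_interior _ L M (S n)), altR_succM by lia.
      rewrite succ_sub1, (pow_pred _ n) by lia. simpl pow. ring.
Qed.

Fixpoint psum (om : env) (a : Z) (k : nat) : R :=
  match k with O => 0 | S k' => psum om a k' + om (a + Z.of_nat k')%Z end.

Lemma wsum_psum om a b : wsum om a b = psum om a (Z.to_nat (b - a + 1)).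
Proof.
  unfold wsum. generalize (Z.to_nat (b - a + 1)).
  induction n as [|n IH]; simpl; [reflexivity|]. rewrite IH. reflexivity.
Qed.

Lemma psum_app om a k1 k2 :
  psum om a (k1 + k2) = psum om a k1 + psum om (a + Z.of_nat k1) k2.
Proof.
  induction k2 as [|k2 IH]; simpl. { rewrite Nat.add_0_r; ring. }
  rewrite Nat.add_succ_r. simpl. rewrite IH, Nat2Z.inj_add, Z.add_assoc. ring.
Qed.

(* A discrete primitive of omega: F(0) = 0 and F(j+1) = F(j) + omega_j. *)
Definition prim (om : env) (k : Z) : R :=
  if (0 <=? k)%Z then psum om 0 (Z.to_nat k) else - psum om k (Z.to_nat (- k)).

Lemma prim_succ om j : prim om (j + 1) = prim om j + om j.
Proof.
  unfold prim. destruct (Z.leb_spec 0 j).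
  - destruct (Z.leb_spec 0 (j + 1)); [|lia].
    replace (Z.to_nat (j + 1)) with (S (Z.to_nat j)) by lia.
    simpl. rewrite Z2Nat.id by lia. reflexivity.
  - destruct (Z.leb_spec 0 (j + 1)).
    + assert (j = -1)%Z by lia. subst. simpl. ring.
    + replace (Z.to_nat (- j)) with (1 + Z.to_nat (- (j + 1)))%nat by lia.
      rewrite psum_app. simpl. replace (j + 1)%Z with (j + Z.of_nat 1)%Z by reflexivity.
      rewrite Z.add_0_r. ring.
Qed.

Lemma prim_psum om a k : prim om (a + Z.of_nat k) = prim om a + psum om a k.
Proof.
  induction k as [|k IH]; simpl psum. { rewrite Z.add_0_r; ring. }
  rewrite Nat2Z.inj_succ.
  replace (a + Z.succ (Z.of_nat k))%Z with ((a + Z.of_nat k) + 1)%Z by lia.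
  rewrite prim_succ, IH. ring.
Qed.

Lemma wsum_prim om a b : (a <= b + 1)%Z -> wsum om a b = prim om (b + 1) - prim om a.
Proof.
  intros H. rewrite wsum_psum.
  replace (b + 1)%Z with (a + Z.of_nat (Z.to_nat (b - a + 1)))%Z at 1 by lia.
  rewrite prim_psum. ring.
Qed.

Lemma prim_0 om : prim om 0 = 0. Proof. reflexivity. Qed.

Lemma prim_env0 k : prim env0 k = 0.
Proof.
  assert (Hz : forall a n, psum env0 a n = 0).
  { intros a n. induction n as [|n IH]; simpl; [reflexivity|]. rewrite IH. unfold env0; ring. }
  unfold prim. destruct (0 <=? k)%Z; rewrite Hz; ring.
Qed.

Definition phP (om : env) (x : Z) : R := - prim om (x + 1).
Definition phQ (om : env) (x : Z) : R := prim om 1 - prim om x.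
Definition phR (om : env) (x : Z) : R := prim om 1 - prim om (x + 1).
Definition phS (om : env) (x : Z) : R := - prim om x.

Lemma Cexpi0 : Cexpi 0 = Cone.
Proof. unfold Cexpi. rewrite cos_0, sin_0. reflexivity. Qed.

Lemma dd_pos l m : dd l m = pos l m. Proof. unfold dd, pos. lia. Qed.

(* In the interior, the three-case definitions of the Thetas collapse to
   e^{i phi(x)}; the middle cases are the empty sums. *)
Lemma ThetaP_phase om n L M : ThetaP om n (S L) (S M) = Cexpi (phP om (pos (S L) (S M))).
Proof.
  unfold ThetaP. cbn [andb Nat.leb]. rewrite dd_pos. set (d := pos (S L) (S M)). unfold phP.
  destruct (Z.ltb_spec (d + 1) 0).
  - rewrite wsum_prim by lia. replace (-1 + 1)%Z with 0%Z by reflexivity.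
    rewrite prim_0. f_equal; ring.
  - destruct (Z.eqb_spec (d + 1) 0) as [E|].
    + rewrite E, prim_0, Ropp_0, Cexpi0. reflexivity.
    + rewrite wsum_prim by lia. rewrite prim_0. f_equal; ring.
Qed.

Lemma ThetaQ_phase om n L M : ThetaQ om n (S L) (S M) = Cexpi (phQ om (pos (S L) (S M))).
Proof.
  unfold ThetaQ. cbn [andb Nat.leb]. rewrite dd_pos. set (d := pos (S L) (S M)). unfold phQ.
  destruct (Z.leb_spec d 0).
  - rewrite wsum_prim by lia. reflexivity.
  - destruct (Z.eqb_spec d 1) as [E|].
    + rewrite E, Rminus_diag, Cexpi0. reflexivity.
    + rewrite wsum_prim by lia. replace (d - 1 + 1)%Z with d by ring. f_equal; ring.
Qed.

Lemma ThetaR_phase om n L M : ThetaR om n (S L) (S M) = Cexpi (phR om (pos (S L) (S M))).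
Proof.
  unfold ThetaR. cbn [andb Nat.leb]. rewrite dd_pos. set (d := pos (S L) (S M)). unfold phR.
  destruct (Z.ltb_spec d 0).
  - rewrite wsum_prim by lia. reflexivity.
  - destruct (Z.eqb_spec d 0) as [E|].
    + rewrite E, Rminus_diag, Cexpi0. reflexivity.
    + rewrite wsum_prim by lia. f_equal; ring.
Qed.

Lemma ThetaS_phase om n L M : ThetaS om n (S L) (S M) = Cexpi (phS om (pos (S L) (S M))).
Proof.
  unfold ThetaS. cbn [andb Nat.leb]. rewrite dd_pos. set (d := pos (S L) (S M)). unfold phS.
  destruct (Z.ltb_spec d 0).
  - rewrite wsum_prim by lia. replace (-1 + 1)%Z with 0%Z by reflexivity.
    rewrite prim_0. f_equal; ring.
  - destruct (Z.eqb_spec d 0) as [E|].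
    + rewrite E, prim_0, Ropp_0, Cexpi0. reflexivity.
    + rewrite wsum_prim by lia. replace (d - 1 + 1)%Z with d by ring.
      rewrite prim_0. f_equal; ring.
Qed.

(* Complex arithmetic on pairs of reals forms a commutative ring, so [ring]
   can normalise matrix entries. *)
Definition Csub (z w : Cx) : Cx := Cadd z (Copp w).

Lemma Cx_ring : ring_theory Czero Cone Cadd Cmul Csub Copp (@eq Cx).
Proof.
  constructor; intros; repeat match goal with z : Cx |- _ => destruct z end;
    unfold Csub, Czero, Cone, Cadd, Cmul, Copp; simpl; f_equal; ring.
Qed.
Add Ring Cx_ring : Cx_ring.

Lemma CR_mul a b : CR (a * b) = Cmul (CR a) (CR b).
Proof. unfold CR, Cmul; simpl; f_equal; ring. Qed.
Lemma CR_add a b : CR (a + b) = Cadd (CR a) (CR b).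
Proof. unfold CR, Cadd; simpl; f_equal; ring. Qed.
Lemma CR_sub a b : CR (a - b) = Csub (CR a) (CR b).
Proof. unfold CR, Csub, Cadd, Copp; simpl; f_equal; ring. Qed.

Lemma Cexpi_add a b : Cmul (Cexpi a) (Cexpi b) = Cexpi (a + b).
Proof. unfold Cexpi, Cmul; simpl. rewrite cos_plus, sin_plus. f_equal; ring. Qed.

(* [span4 om al be ga de = al P_0 + be Q_0 + ga R_0 + de S_0], where
   R_0 = [[c_0, d_0], [0, 0]] and S_0 = [[0, 0], [a_0, b_0]]. *)
Definition span4 (om : env) (al be ga de : Cx) : M2 :=
  mkM2 (Cadd (Cmul al (a_ om 0)) (Cmul ga (c_ om 0)))
       (Cadd (Cmul al (b_ om 0)) (Cmul ga (d_ om 0)))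
       (Cadd (Cmul be (c_ om 0)) (Cmul de (a_ om 0)))
       (Cadd (Cmul be (d_ om 0)) (Cmul de (b_ om 0))).

(* P_y P_0 = a_y P_0, P_y Q_0 = b_y R_0, P_y R_0 = a_y R_0, P_y S_0 = b_y P_0. *)
Lemma Pm_span4 om y al be ga de : Mmul (Pm om y) (span4 om al be ga de) =
  span4 om (Cadd (Cmul (a_ om y) al) (Cmul (b_ om y) de)) Czero
           (Cadd (Cmul (b_ om y) be) (Cmul (a_ om y) ga)) Czero.
Proof. unfold Mmul, Pm, span4; simpl; f_equal; ring. Qed.

(* Q_y P_0 = c_y S_0, Q_y Q_0 = d_y Q_0, Q_y R_0 = c_y Q_0, Q_y S_0 = d_y S_0. *)
Lemma Qm_span4 om y al be ga de : Mmul (Qm om y) (span4 om al be ga de) =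
  span4 om Czero (Cadd (Cmul (d_ om y) be) (Cmul (c_ om y) ga))
           Czero (Cadd (Cmul (c_ om y) al) (Cmul (d_ om y) de)).
Proof. unfold Mmul, Qm, span4; simpl; f_equal; ring. Qed.

Lemma span4_add om a1 b1 c1 d1 a2 b2 c2 d2 :
  Madd (span4 om a1 b1 c1 d1) (span4 om a2 b2 c2 d2) =
  span4 om (Cadd a1 a2) (Cadd b1 b2) (Cadd c1 c2) (Cadd d1 d2).
Proof. unfold Madd, span4; simpl; f_equal; ring. Qed.

Lemma span4_zero om : Mzero = span4 om Czero Czero Czero Czero.
Proof. unfold Mzero, span4; f_equal; ring. Qed.

Definition ampP om n l m := Cmul (CR (pH n l m)) (Cexpi (phP om (pos l m))).
Definition ampQ om n l m := Cmul (CR (qH n l m)) (Cexpi (phQ om (pos l m))).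
Definition ampR om n l m := Cmul (CR (rH n l m)) (Cexpi (phR om (pos l m))).
Definition ampS om n l m := Cmul (CR (rH n l m)) (Cexpi (phS om (pos l m))).

(* One step of the walk shifts the phase by the environment at the site
   it leaves ... *)
Lemma phP_step om x : Cexpi (phP om x) = Cmul (Cexpi (om (x + 1)%Z)) (Cexpi (phP om (x + 1))).
Proof. rewrite Cexpi_add. f_equal. unfold phP. rewrite (prim_succ om (x + 1)). ring. Qed.

Lemma phR_step om x : Cexpi (phR om x) = Cmul (Cexpi (om (x + 1)%Z)) (Cexpi (phR om (x + 1))).
Proof. rewrite Cexpi_add. f_equal. unfold phR. rewrite (prim_succ om (x + 1)). ring. Qed.

Lemma phQ_step om x : Cexpi (phQ om x) = Cmul (Cexpi (- om (x - 1)%Z)) (Cexpi (phQ om (x - 1))).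
Proof.
  rewrite Cexpi_add. f_equal. unfold phQ.
  rewrite <- (Z.sub_add 1 x) at 1. rewrite (prim_succ om (x - 1)). ring.
Qed.

Lemma phS_step om x : Cexpi (phS om x) = Cmul (Cexpi (- om (x - 1)%Z)) (Cexpi (phS om (x - 1))).
Proof.
  rewrite Cexpi_add. f_equal. unfold phS.
  rewrite <- (Z.sub_add 1 x) at 1. rewrite (prim_succ om (x - 1)). ring.
Qed.

(* ... and the off-diagonal moves (S to P, Q to R and back) cost nothing. *)
Lemma phS_succ om x : phS om (x + 1) = phP om x. Proof. reflexivity. Qed.
Lemma phQ_succ om x : phQ om (x + 1) = phR om x. Proof. reflexivity. Qed.
Lemma phR_pred om x : phR om (x - 1) = phQ om x.
Proof. unfold phR, phQ. rewrite Z.sub_add. reflexivity. Qed.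
Lemma phP_pred om x : phP om (x - 1) = phS om x.
Proof. unfold phP, phS. rewrite Z.sub_add. reflexivity. Qed.

Lemma pos_succ_l l m : pos l m = (pos (S l) m + 1)%Z. Proof. unfold pos; lia. Qed.
Lemma pos_succ_m l m : pos l m = (pos l (S m) - 1)%Z. Proof. unfold pos; lia. Qed.

(* Once amplitudes and phases are both updated, the coordinates obey exactly
   the rules of [Pm_span4] (steps from x+1) and [Qm_span4] (from x-1). *)
Ltac close_amp_step :=
  unfold a_, b_, c_, d_; rewrite ?CR_mul, ?CR_add, ?CR_sub; unfold Csub; ring.

Lemma ampP_step om n l m : (1 <= n)%nat -> (l + m = n)%nat ->
  ampP om (S n) (S l) m =
  Cadd (Cmul (a_ om (pos (S l) m + 1)) (ampP om n l m))
       (Cmul (b_ om (pos (S l) m + 1)) (ampS om n l m)).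
Proof.
  intros Hn Hlm. unfold ampP, ampS. rewrite pH_step by lia.
  rewrite (pos_succ_l l m), phS_succ, (phP_step om (pos (S l) m)). close_amp_step.
Qed.

Lemma ampR_step om n l m : (1 <= n)%nat -> (l + m = n)%nat ->
  ampR om (S n) (S l) m =
  Cadd (Cmul (b_ om (pos (S l) m + 1)) (ampQ om n l m))
       (Cmul (a_ om (pos (S l) m + 1)) (ampR om n l m)).
Proof.
  intros Hn Hlm. unfold ampR, ampQ. rewrite rH_step_l by lia.
  rewrite (pos_succ_l l m), phQ_succ, (phR_step om (pos (S l) m)). close_amp_step.
Qed.

Lemma ampQ_step om n l m : (1 <= n)%nat -> (l + m = n)%nat ->
  ampQ om (S n) l (S m) =
  Cadd (Cmul (d_ om (pos l (S m) - 1)) (ampQ om n l m))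
       (Cmul (c_ om (pos l (S m) - 1)) (ampR om n l m)).
Proof.
  intros Hn Hlm. unfold ampQ, ampR. rewrite qH_step by lia.
  rewrite (pos_succ_m l m), phR_pred, (phQ_step om (pos l (S m))). close_amp_step.
Qed.

Lemma ampS_step om n l m : (1 <= n)%nat -> (l + m = n)%nat ->
  ampS om (S n) l (S m) =
  Cadd (Cmul (c_ om (pos l (S m) - 1)) (ampP om n l m))
       (Cmul (d_ om (pos l (S m) - 1)) (ampS om n l m)).
Proof.
  intros Hn Hlm. unfold ampS, ampP. rewrite rH_step_m by lia.
  rewrite (pos_succ_m l m), phP_pred, (phS_step om (pos l (S m))). close_amp_step.
Qed.

Lemma CR0_mul z : Cmul (CR 0) z = Czero.
Proof. unfold Cmul, CR, Czero; simpl; f_equal; ring. Qed.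

Lemma ampP_0m om n m : ampP om n 0 (S m) = Czero.
Proof. unfold ampP. rewrite pH_0m. apply CR0_mul. Qed.
Lemma ampQ_l0 om n l : ampQ om n (S l) 0 = Czero.
Proof. unfold ampQ. rewrite qH_l0. apply CR0_mul. Qed.
Lemma ampR_0m om n m : ampR om n 0 m = Czero.
Proof. unfold ampR. rewrite rH_0m. apply CR0_mul. Qed.
Lemma ampR_l0 om n l : ampR om n l 0 = Czero.
Proof. unfold ampR. rewrite rH_l0. apply CR0_mul. Qed.
Lemma ampS_0m om n m : ampS om n 0 m = Czero.
Proof. unfold ampS. rewrite rH_0m. apply CR0_mul. Qed.
Lemma ampS_l0 om n l : ampS om n l 0 = Czero.
Proof. unfold ampS. rewrite rH_l0. apply CR0_mul. Qed.

Definition Xi_model (om : env) (n l m : nat) : M2 :=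
  span4 om (ampP om n l m) (ampQ om n l m) (ampR om n l m) (ampS om n l m).

Lemma Pm_model om n l m : (1 <= n)%nat -> (l + m = n)%nat ->
  Mmul (Pm om (pos (S l) m + 1)) (Xi_model om n l m) =
  span4 om (ampP om (S n) (S l) m) Czero (ampR om (S n) (S l) m) Czero.
Proof. intros Hn Hlm. unfold Xi_model. rewrite Pm_span4, ampP_step, ampR_step by lia. reflexivity. Qed.

Lemma Qm_model om n l m : (1 <= n)%nat -> (l + m = n)%nat ->
  Mmul (Qm om (pos l (S m) - 1)) (Xi_model om n l m) =
  span4 om Czero (ampQ om (S n) l (S m)) Czero (ampS om (S n) l (S m)).
Proof. intros Hn Hlm. unfold Xi_model. rewrite Qm_span4, ampQ_step, ampS_step by lia. reflexivity. Qed.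

Lemma Xi_model_one om l m : (l + m = 1)%nat -> Xi om 1 l m = Xi_model om 1 l m.
Proof.
  intros Hlm. unfold Xi_model.
  destruct l as [|[|l]]; destruct m as [|[|m]]; try lia; simpl Xi.
  - rewrite ampP_0m, ampR_0m, ampS_0m.
    unfold ampQ. rewrite qH_0m. unfold phQ. simpl pos. rewrite Rminus_diag, Cexpi0.
    unfold Madd, Mmul, Qm, Mid, Mzero, span4, CR; simpl; f_equal;
      change (1, 0) with Cone; change (0, 0) with Czero; ring.
  - rewrite ampQ_l0, ampR_l0, ampS_l0.
    unfold ampP. rewrite pH_l0. unfold phP. simpl pos. rewrite prim_0, Ropp_0, Cexpi0.
    unfold Madd, Mmul, Pm, Mid, Mzero, span4, CR; simpl; f_equal;
      change (1, 0) with Cone; change (0, 0) with Czero; ring.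
Qed.

Lemma Xi_succ om n l m : Xi om (S n) l m =
  Madd (match l with O => Mzero | S l' => Mmul (Pm om (pos l m + 1)) (Xi om n l' m) end)
       (match m with O => Mzero | S m' => Mmul (Qm om (pos l m - 1)) (Xi om n l m') end).
Proof. reflexivity. Qed.

Lemma Xi_decomposition om n l m : (l + m = S n)%nat -> Xi om (S n) l m = Xi_model om (S n) l m.
Proof.
  revert l m. induction n as [|n IH]; intros l m Hlm; [now apply Xi_model_one|].
  rewrite Xi_succ.
  destruct l as [|l]; destruct m as [|m]; try lia; cbv beta iota; rewrite ?IH by lia;
    rewrite ?Pm_model, ?Qm_model, ?(span4_zero om), ?span4_add by lia; unfold Xi_model;
    rewrite ?ampP_0m, ?ampQ_l0, ?ampR_0m, ?ampR_l0, ?ampS_0m, ?ampS_l0; f_equal; ring.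
Qed.

(* The two components of U_0 phi_star, namely e^{i w_0}/2 + i/2 and
   1/2 - i e^{-i w_0}/2: applying P_0, Q_0, R_0, S_0 to phi_star yields them. *)
Definition coin_up (om : env) : Cx :=
  Cadd (Cmul (a_ om 0%Z) (CR s2)) (Cmul (b_ om 0%Z) (0, s2)).
Definition coin_down (om : env) : Cx :=
  Cadd (Cmul (c_ om 0%Z) (CR s2)) (Cmul (d_ om 0%Z) (0, s2)).

Lemma span4_apply om al be ga de : Mapply (span4 om al be ga de) phi_star =
  (Cadd (Cmul al (coin_up om)) (Cmul ga (coin_down om)),
   Cadd (Cmul be (coin_down om)) (Cmul de (coin_up om))).
Proof. unfold Mapply, span4, phi_star, coin_up, coin_down; simpl; f_equal; ring. Qed.

Lemma s2_sq : s2 * s2 = / 2.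
Proof. rewrite <- Rinv_mult, sqrt_sqrt by lra. reflexivity. Qed.

Lemma coin_up_eq om : coin_up om = Cmul (CR (/ 2)) (cos (om 0%Z), sin (om 0%Z) + 1).
Proof. unfold coin_up, a_, b_, Cexpi, Cmul, Cadd, CR; simpl. rewrite <- s2_sq. f_equal; ring. Qed.

Lemma coin_down_eq om : coin_down om = Cmul (CR (/ 2)) (1 - sin (om 0%Z), - cos (om 0%Z)).
Proof.
  unfold coin_down, c_, d_, Cexpi, Cmul, Cadd, CR, Copp; simpl.
  rewrite cos_neg, sin_neg, <- s2_sq. f_equal; ring.
Qed.

Lemma Cnorm2_Cexpi t : Cnorm2 (Cexpi t) = 1.
Proof. unfold Cnorm2, Cexpi; simpl. generalize (sin2_cos2 t). unfold Rsqr. lra. Qed.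

Lemma Cnorm2_two_terms p r e1 e2 u v : Cnorm2 e1 = 1 -> Cnorm2 e2 = 1 ->
  Cnorm2 (Cadd (Cmul (Cmul (CR p) e1) u) (Cmul (Cmul (CR r) e2) v)) =
  p ^ 2 * Cnorm2 u + r ^ 2 * Cnorm2 v + 2 * p * r * Cre (Cmul (Cmul e1 (Cconj e2)) (Cmul u (Cconj v))).
Proof.
  intros H1 H2.
  transitivity (p ^ 2 * Cnorm2 e1 * Cnorm2 u + r ^ 2 * Cnorm2 e2 * Cnorm2 v
                + 2 * p * r * Cre (Cmul (Cmul e1 (Cconj e2)) (Cmul u (Cconj v)))).
  - destruct e1, e2, u, v. unfold Cnorm2, Cadd, Cmul, CR, Cre, Cconj; simpl. ring.
  - rewrite H1, H2. ring.
Qed.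

Lemma Cnorm2_coin_up w : Cnorm2 (Cmul (CR (/ 2)) (cos w, sin w + 1)) = / 2 * (1 + sin w).
Proof. unfold Cnorm2, Cmul, CR; simpl. generalize (sin2_cos2 w). unfold Rsqr. nra. Qed.

Lemma Cnorm2_coin_down w : Cnorm2 (Cmul (CR (/ 2)) (1 - sin w, - cos w)) = / 2 * (1 - sin w).
Proof. unfold Cnorm2, Cmul, CR; simpl. generalize (sin2_cos2 w). unfold Rsqr. nra. Qed.

Lemma interference_up_down w e1 e2 :
  Cre (Cmul (Cmul e1 (Cconj e2))
            (Cmul (Cmul (CR (/ 2)) (cos w, sin w + 1))
                  (Cconj (Cmul (CR (/ 2)) (1 - sin w, - cos w))))) =
  - / 4 * Cim (Cmul (Cmul (Cadd Cone (Cexpi (2 * w))) e1) (Cconj e2)).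
Proof.
  destruct e1, e2. unfold Cre, Cim, Cmul, Cconj, Cadd, Cone, CR, Cexpi; simpl.
  rewrite cos_2a, sin_2a. field.
Qed.

Lemma interference_down_up w e1 e2 :
  Cre (Cmul (Cmul e1 (Cconj e2))
            (Cmul (Cmul (CR (/ 2)) (1 - sin w, - cos w))
                  (Cconj (Cmul (CR (/ 2)) (cos w, sin w + 1))))) =
  - / 4 * Cim (Cmul (Cmul (Cadd Cone (Cexpi (2 * w))) e2) (Cconj e1)).
Proof.
  destruct e1, e2. unfold Cre, Cim, Cmul, Cconj, Cadd, Cone, CR, Cexpi; simpl.
  rewrite cos_2a, sin_2a. field.
Qed.

Lemma prob_span4 om p q r tp tq tr ts :
  Vnorm2 (Mapply (span4 om (Cmul (CR p) (Cexpi tp)) (Cmul (CR q) (Cexpi tq))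
                           (Cmul (CR r) (Cexpi tr)) (Cmul (CR r) (Cexpi ts))) phi_star)
  = / 2 * (p ^ 2 * (1 + sin (om 0%Z)) + q ^ 2 * (1 - sin (om 0%Z)) + 2 * r ^ 2)
    - r / 2 * ( p * Cim (Cmul (Cmul (Cadd Cone (Cexpi (2 * om 0%Z))) (Cexpi tp)) (Cconj (Cexpi tr)))
              + q * Cim (Cmul (Cmul (Cadd Cone (Cexpi (2 * om 0%Z))) (Cexpi ts)) (Cconj (Cexpi tq)))).
Proof.
  rewrite span4_apply. unfold Vnorm2. cbn [fst snd].
  rewrite !Cnorm2_two_terms by apply Cnorm2_Cexpi.
  rewrite coin_up_eq, coin_down_eq, Cnorm2_coin_up, Cnorm2_coin_down,
    interference_up_down, interference_down_up.
  field.
Qed.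

Lemma prob_closed_form om n l m : (l + m = S n)%nat ->
  prob om (S n) l m =
  / 2 * (pH (S n) l m ^ 2 * (1 + sin (om 0%Z)) + qH (S n) l m ^ 2 * (1 - sin (om 0%Z))
         + 2 * rH (S n) l m ^ 2)
  - rH (S n) l m / 2 *
    ( pH (S n) l m * Cim (Cmul (Cmul (Cadd Cone (Cexpi (2 * om 0%Z))) (Cexpi (phP om (pos l m))))
                               (Cconj (Cexpi (phR om (pos l m)))))
    + qH (S n) l m * Cim (Cmul (Cmul (Cadd Cone (Cexpi (2 * om 0%Z))) (Cexpi (phS om (pos l m))))
                               (Cconj (Cexpi (phQ om (pos l m)))))).
Proof. intros H. unfold prob. rewrite Xi_decomposition by exact H. apply prob_span4. Qed.

Lemma prob_env0_closed_form n l m : (l + m = S n)%nat ->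
  prob env0 (S n) l m = / 2 * (pH (S n) l m ^ 2 + qH (S n) l m ^ 2 + 2 * rH (S n) l m ^ 2).
Proof.
  intros H. rewrite prob_closed_form by exact H.
  unfold phP, phQ, phR, phS. rewrite !prim_env0.
  replace (env0 0%Z) with 0 by reflexivity.
  rewrite Rmult_0_r, sin_0, !Ropp_0, Rminus_diag, Cexpi0.
  unfold Cim, Cmul, Cadd, Cone, Cconj; simpl. field.
Qed.

(* The Thetas of the statement agree with the phases wherever r^(H) != 0. *)
Lemma rH_Theta_phases om n l m (f : Cx -> Cx -> R) :
  rH n l m * (pH n l m * f (ThetaP om n l m) (ThetaR om n l m)
              + qH n l m * f (ThetaS om n l m) (ThetaQ om n l m)) =
  rH n l m * (pH n l m * f (Cexpi (phP om (pos l m))) (Cexpi (phR om (pos l m)))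
              + qH n l m * f (Cexpi (phS om (pos l m))) (Cexpi (phQ om (pos l m)))).
Proof.
  destruct l as [|L]; [rewrite rH_0m; ring|].
  destruct m as [|M]; [rewrite rH_l0; ring|].
  rewrite ThetaP_phase, ThetaQ_phase, ThetaR_phase, ThetaS_phase. reflexivity.
Qed.

Theorem mainTheorem5 (om : env) (n l m : nat) (hn : n = (l + m)%nat) :
  prob om n l m =
    prob env0 n l m
    + / 2 * (pH n l m ^ 2 - qH n l m ^ 2) * sin (om 0%Z)
    - rH n l m / 2 *
      ( pH n l m *
          Cim (Cmul (Cmul (Cadd Cone (Cexpi (2 * om 0%Z))) (ThetaP om n l m))
                    (Cconj (ThetaR om n l m)))
      + qH n l m *
          Cim (Cmul (Cmul (Cadd Cone (Cexpi (2 * om 0%Z))) (ThetaS om n l m))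
                    (Cconj (ThetaQ om n l m)))).
Proof.
  destruct n as [|n].
  - (* n = 0: Xi_0(0,0) = I does not depend on omega, and r^(H) = 0. *)
    assert (l = 0%nat) as -> by lia. assert (m = 0%nat) as -> by lia.
    change (prob om 0 0 0) with (prob env0 0 0 0).
    replace (pH 0 0 0) with 1 by reflexivity. replace (qH 0 0 0) with 1 by reflexivity.
    rewrite rH_0m. field.
  - pose proof (rH_Theta_phases om (S n) l m
      (fun e1 e2 => Cim (Cmul (Cmul (Cadd Cone (Cexpi (2 * om 0%Z))) e1) (Cconj e2))))
      as Hphases.
    rewrite prob_closed_form, prob_env0_closed_form by lia. lra.
Qed.
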